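(* Let $V$ be a real vector space of dimension $m$, $\Gamma$ a finitely generated free abelian dense subgroup of $V$ acting by translations, and $\mathcal C$ a countable $\Gamma$-invariant collection of affine hyperplanes with finitely many $\Gamma$-orbits and normals spanning $V$. Suppose $\mathcal P$ consists of finitely many $\Gamma$-orbits. Then for every choice of $W_1,\dots,W_m\in\mathcal C$ intersecting in a single point and every pair of subsets $A_1,A_2\subset\{1,\dots,m\}$: (i) if $A_1\cap A_2=\emptyset$ then $\mathrm{rk}\,\Gamma^{A_1}+\mathrm{rk}\,\Gamma^{A_2}-\mathrm{rk}\,\Gamma^{A_1\cup A_2}=\mathrm{rk}\,\Gamma$; (ii) if $A_1\cup A_2=\{1,\dots,m\}$ then $\mathrm{rk}\,\Gamma^{A_1}+\mathrm{rk}\,\Gamma^{A_2}=\mathrm{rk}\,\Gamma^{A_1\cap A_2}$.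
   Context: $\mathcal P$ is the set of points of $V$ that are $0$-dimensional intersections of $m$ elements of $\mathcal C$. For $A\subset\{1,\dots,m\}$, $W_A=\bigcap_{i\in A}W_i$ (with $W_\emptyset=V$) and $\Gamma^A\subset\Gamma$ is the stabilizer of $W_A$ under translation. *)

From HB Require Import structures.
From mathcomp Require Import all_boot all_order all_algebra.
From mathcomp Require Import reals.
From Stdlib Require Import ClassicalEpsilon.
Set Implicit Arguments. Unset Strict Implicit. Unset Printing Implicit Defensive.
Import Order.TTheory GRing.Theory Num.Theory.
Local Open Scope ring_scope.

Section Defs.
Variables (R : realType) (m : nat).
Notation V := 'rV[R]_m.

Definition dotv (x a : V) : R := \sum_(j < m) x 0 j * a 0 j.

Definition has_zrank (S : V -> Prop) (n : nat) : Prop :=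
  exists g : 'I_n -> V,
    (forall k : 'I_n -> int, \sum_(i < n) g i *~ k i = 0 -> forall i, k i = 0)
    /\ (forall x, S x <-> exists k : 'I_n -> int, x = \sum_(i < n) g i *~ k i).

(* rank of a free abelian group of finite rank (0 by convention otherwise) *)
Definition zrank (S : V -> Prop) : nat := epsilon (inhabits 0%N) (has_zrank S).

(* density of S in V (sup norm, all norms on R^m being equivalent) *)
Definition dense_in_V (S : V -> Prop) : Prop :=
  forall (v : V) (eps : R), 0 < eps ->
    exists g, S g /\ forall j : 'I_m, `|g 0 j - v 0 j| < eps.

Definition translate (H : V -> Prop) (g : V) : V -> Prop := fun x => H (x - g).

Definition same_set (H K : V -> Prop) : Prop := forall x, H x <-> K x.

Definition hyperplane (p : V * R) : V -> Prop := fun x => dotv x p.1 = p.2.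

Variable (I : Type) (hyp : I -> V * R).
(* C = { hyperplane (hyp i) | i : I } *)

Definition W_A (w : 'I_m -> I) (A : {set 'I_m}) : V -> Prop :=
  fun x => forall k, k \in A -> hyperplane (hyp (w k)) x.

Definition stabA (Gamma : V -> Prop) (w : 'I_m -> I) (A : {set 'I_m}) : V -> Prop :=
  fun g => Gamma g /\ same_set (translate (W_A w A) g) (W_A w A).

Definition meet_in_point (w : 'I_m -> I) (p : V) : Prop :=
  forall x, W_A w setT x <-> x = p.

Definition Pset (p : V) : Prop := exists w : 'I_m -> I, meet_in_point w p.

End Defs.

From HB Require Import structures.
From mathcomp Require Import all_boot all_order all_algebra.
From mathcomp Require Import reals boolp.
From mathcomp Require Import ring.
From Stdlib Require Import ClassicalEpsilon.
Set Implicit Arguments. Unset Strict Implicit. Unset Printing Implicit Defensive.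
Import Order.TTheory GRing.Theory Num.Theory.
Local Open Scope ring_scope.

(* Write Gamma^A = {g in Gamma | <g, a_k> = 0 for k in A}, a_k the normal of W_k.  Both
   identities are instances of  rk S1 + rk S2 = rk T + rk (S1 :&: S2)  for subgroups S1, S2 of a
   free abelian group T such that a positive multiple of every element of T lies in S1 + S2:
   passing to rational coordinates turns this into the dimension formula for the sum and the
   intersection of two subspaces.  The finite-index condition for T = Gamma^(A1 :&: A2) and
   S_i = Gamma^(A_i) comes from the finiteness of P modulo Gamma.  Given x in T, let l satisfy
   <l, a_k> = <x, a_k> for k in A2 and <l, a_k> = 0 otherwise.  Then p + N l is the intersection
   point of the W_k translated by N x for k in A2 (and untranslated otherwise), so it lies in P;
   by pigeonhole two of p, p + l, ..., p + s l (s the number of orbits) differ by an element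
   d l of Gamma, and d x = d l + (d x - d l) with d l in Gamma^A1, d x - d l in Gamma^A2.  In
   case (ii), Gamma^(A1 :|: A2) = 0 because the normals a_k form a basis. *)

Definition ocons (T : Type) n (x : T) (f : 'I_n -> T) : 'I_n.+1 -> T :=
  fun i => if unlift ord0 i is Some j then f j else x.

Lemma ocons0 T n (x : T) (f : 'I_n -> T) : ocons x f ord0 = x.
Proof. by rewrite /ocons unlift_none. Qed.

Lemma oconsS T n (x : T) (f : 'I_n -> T) j : ocons x f (lift ord0 j) = f j.
Proof. by rewrite /ocons liftK. Qed.

Lemma ocons_eta T n (f : 'I_n.+1 -> T) : ocons (f ord0) (f \o lift ord0) =1 f.
Proof. by move=> i; case: (unliftP ord0 i) => [j ->|->]; rewrite ?oconsS ?ocons0. Qed.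

Section ZLattice.
Variable M : zmodType.

Definition zcomb n (g : 'I_n -> M) (k : 'I_n -> int) : M := \sum_(i < n) g i *~ k i.
Definition zfree n (g : 'I_n -> M) : Prop := forall k, zcomb g k = 0 -> forall i, k i = 0.
Definition zspan n (g : 'I_n -> M) (x : M) : Prop := exists k, x = zcomb g k.
Definition zbasis (S : M -> Prop) n (g : 'I_n -> M) : Prop :=
  zfree g /\ forall x, S x <-> zspan g x.
Definition subgroup (S : M -> Prop) : Prop := S 0 /\ forall x y, S x -> S y -> S (x - y).

Lemma eq_zcomb n (g1 g2 : 'I_n -> M) k1 k2 : g1 =1 g2 -> k1 =1 k2 -> zcomb g1 k1 = zcomb g2 k2.
Proof. by move=> eg ek; apply: eq_bigr => i _; rewrite eg ek. Qed.

Lemma zcombD n (g : 'I_n -> M) k1 k2 : zcomb g k1 + zcomb g k2 = zcomb g (k1 \+ k2).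
Proof. by rewrite /zcomb -big_split; apply: eq_bigr => i _; rewrite mulrzDr. Qed.

Lemma zcombB n (g : 'I_n -> M) k1 k2 : zcomb g k1 - zcomb g k2 = zcomb g (k1 \- k2).
Proof. by rewrite /zcomb -sumrB; apply: eq_bigr => i _; rewrite mulrzBr. Qed.

Lemma zcombMz n (g : 'I_n -> M) k z : zcomb g k *~ z = zcomb g (fun i => k i * z).
Proof. by rewrite /zcomb mulrz_suml; apply: eq_bigr => i _; rewrite mulrzA. Qed.

Lemma zcomb0 n (g : 'I_n -> M) : zcomb g (fun=> 0) = 0.
Proof. by rewrite /zcomb big1 // => i _; rewrite mulr0z. Qed.

Lemma zcomb_ocons n u (h : 'I_n -> M) c k : zcomb (ocons u h) (ocons c k) = u *~ c + zcomb h k.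
Proof.
rewrite /zcomb big_ord_recl !ocons0; congr (_ + _).
by apply: eq_bigr => j _; rewrite !oconsS.
Qed.

Lemma zcomb_ocons0 n (g : 'I_n.+1 -> M) k : zcomb g (ocons 0 k) = zcomb (g \o lift ord0) k.
Proof. by rewrite -(eq_zcomb (ocons_eta g) (frefl _)) zcomb_ocons mulr0z add0r. Qed.

Section Subgroup.
Variables (S : M -> Prop) (S_sub : subgroup S).

Lemma subgroupN x : S x -> S (- x).
Proof. by move=> Sx; rewrite -sub0r; apply: S_sub.2 => //; exact: S_sub.1. Qed.

Lemma subgroupD x y : S x -> S y -> S (x + y).
Proof. by move=> Sx Sy; rewrite -[y]opprK; apply: S_sub.2 => //; exact: subgroupN. Qed.

Lemma subgroupMn x N : S x -> S (x *+ N).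
Proof.
by move=> Sx; elim: N => [|N IH]; rewrite ?mulr0n ?mulrS; [exact: S_sub.1 | exact: subgroupD].
Qed.

Lemma subgroupMz x z : S x -> S (x *~ z).
Proof.
by move=> Sx; case: z => N; rewrite ?NegzE ?mulrNz -pmulrn; [|apply: subgroupN]; exact: subgroupMn.
Qed.

Lemma subgroup_zcomb n (g : 'I_n -> M) k : (forall i, S (g i)) -> S (zcomb g k).
Proof.
move=> Sg; apply: (big_ind S); [exact: S_sub.1 | exact: subgroupD |].
by move=> i _; apply: subgroupMz.
Qed.

End Subgroup.

Lemma zspan_subgroup n (g : 'I_n -> M) : subgroup (zspan g).
Proof.
split; first by exists (fun=> 0); rewrite zcomb0.
by move=> _ _ [k1 ->] [k2 ->]; exists (k1 \- k2); rewrite zcombB.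
Qed.

Lemma zbasis_mem S n (g : 'I_n -> M) j : zbasis S g -> S (g j).
Proof.
move=> [_ gE]; apply/gE; exists (fun i => (i == j)%:Z).
rewrite /zcomb (bigD1 j) //= eqxx big1 ?addr0 // => i /negPf ->; exact: mulr0z.
Qed.

Lemma zbasis_subgroup S n (g : 'I_n -> M) : zbasis S g -> subgroup S.
Proof.
move=> [_ gE]; split; first by apply/gE; exact: (zspan_subgroup g).1.
by move=> x y /gE gx /gE gy; apply/gE; exact: (zspan_subgroup g).2.
Qed.

Section Coordinates.
Variables (n : nat) (g : 'I_n -> M).
Hypothesis g_free : zfree g.

Definition zcoord (x : M) : 'I_n -> int :=
  epsilon (inhabits (fun=> 0)) (fun k => x = zcomb g k).

Lemma zcoordK x : zspan g x -> x = zcomb g (zcoord x).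
Proof. exact: epsilon_spec. Qed.

Lemma zcomb_inj k1 k2 : zcomb g k1 = zcomb g k2 -> k1 =1 k2.
Proof.
move=> e i; apply/eqP; rewrite -subr_eq0; apply/eqP.
by apply: (@g_free (k1 \- k2) _ i); rewrite -zcombB e subrr.
Qed.

Lemma zcoord_zcomb k : zcoord (zcomb g k) =1 k.
Proof. by apply: zcomb_inj; rewrite -zcoordK //; exists k. Qed.

Lemma zcoord0 i : zcoord 0 i = 0.
Proof. by rewrite -(zcomb0 g) zcoord_zcomb. Qed.

Lemma zcoordD x y : zspan g x -> zspan g y -> zcoord (x + y) =1 zcoord x \+ zcoord y.
Proof. by move=> gx gy i; rewrite {1}(zcoordK gx) {1}(zcoordK gy) zcombD zcoord_zcomb. Qed.

Lemma zcoordB x y : zspan g x -> zspan g y -> zcoord (x - y) =1 zcoord x \- zcoord y.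
Proof. by move=> gx gy i; rewrite {1}(zcoordK gx) {1}(zcoordK gy) zcombB zcoord_zcomb. Qed.

Lemma zcoordMz x z : zspan g x -> zcoord (x *~ z) =1 (fun i => zcoord x i * z).
Proof. by move=> gx i; rewrite {1}(zcoordK gx) zcombMz zcoord_zcomb. Qed.

Lemma zcoord_zcomb_span r (h : 'I_r -> M) l : (forall j, zspan g (h j)) ->
  zcoord (zcomb h l) =1 (fun i => \sum_(j < r) zcoord (h j) i * l j).
Proof.
move=> hg; have -> : zcomb h l = zcomb g (fun i => \sum_(j < r) zcoord (h j) i * l j).
  rewrite /zcomb (eq_bigr (fun j => zcomb g (fun i => zcoord (h j) i * l j))) => [|j _].
    by rewrite exchange_big; apply: eq_bigr => i _; rewrite mulrz_sumr.
  by rewrite -zcombMz -zcoordK.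
exact: zcoord_zcomb.
Qed.

End Coordinates.
End ZLattice.

Lemma int_subgroup_dvd (T : int -> Prop) :
  subgroup T -> exists2 d, T d & forall t, T t -> (d %| t)%Z.
Proof.
move=> T_sub; have [[t [Tt t0]] | T0] := pselect (exists t, T t /\ t != 0); last first.
  exists 0 => [|t Tt]; first exact: T_sub.1.
  by rewrite dvd0z; case: eqP => // /eqP t0; case: T0; exists t.
have ex_pos : exists N, `[< T N%:Z /\ (0 < N)%N >].
  exists `|t|%N; apply/asboolP; rewrite absz_gt0; split=> //.
  rewrite abszE; have [/ger0_norm -> // | /ltW/ler0_norm ->] := leP 0 t.
  exact: subgroupN.
case: (ex_minnP ex_pos) => d /asboolP [Td d0] d_min; exists d%:Z => // s Ts.
apply/dvdz_mod0P; have rem_ge0 : 0 <= (s %% d)%Z by rewrite modz_ge0 // eqz_nat -lt0n.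
have : T (s %% d)%Z.
  by rewrite /modz; apply: T_sub.2 => //; rewrite mulrC -mulrzz; exact: subgroupMz.
have [-> // | rem0 Trem] := eqVneq (s %% d)%Z 0.
have : (d <= `|(s %% d)%Z|)%N by apply: d_min; apply/asboolP; rewrite absz_gt0 gez0_abs.
by rewrite -lez_nat gez0_abs // leNgt ltz_pmod.
Qed.

Section FreeSubgroup.
Variable M : zmodType.

Lemma zfree_behead n (g : 'I_n.+1 -> M) : zfree g -> zfree (g \o lift ord0).
Proof.
move=> g_free k k0 j; rewrite -(oconsS 0 k).
by apply: (@g_free (ocons 0 k)); rewrite zcomb_ocons0.
Qed.

Section Step.
Variables (n : nat) (g : 'I_n.+1 -> M).
Hypothesis g_free : zfree g.

Lemma zspan_behead x : zspan g x -> zspan (g \o lift ord0) x <-> zcoord g x ord0 = 0.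
Proof.
move=> gx; split => [[k ->] | x0].
  by rewrite -zcomb_ocons0 zcoord_zcomb // ocons0.
exists (zcoord g x \o lift ord0); rewrite -zcomb_ocons0 {1}(zcoordK gx).
by apply: eq_zcomb => // i; rewrite -x0 ocons_eta.
Qed.

Lemma zbasis_ocons S u r (h : 'I_r -> M) :
  subgroup S -> (forall x, S x -> zspan g x) -> S u -> zcoord g u ord0 != 0 ->
  (forall x, S x -> (zcoord g u ord0 %| zcoord g x ord0)%Z) ->
  zbasis (fun x => S x /\ zcoord g x ord0 = 0) h -> zbasis S (ocons u h).
Proof.
move=> S_sub Sg Su u0 u_dvd hb; have [h_free hE] := hb.
have Sh k : S (zcomb h k) /\ zcoord g (zcomb h k) ord0 = 0 by apply/hE; exists k.
split=> [l | x].
  rewrite -(eq_zcomb (frefl _) (ocons_eta l)) zcomb_ocons => l0.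
  have ul : zspan g (u *~ l ord0) by apply: Sg; exact: subgroupMz.
  have hl : zspan g (zcomb h (l \o lift ord0)) by apply: Sg; exact: (Sh _).1.
  have l_ord0 : l ord0 = 0.
    have : zcoord g u ord0 * l ord0 = 0.
      rewrite -(zcoordMz g_free _ (Sg u Su)) -[RHS](zcoord0 g_free ord0) -l0.
      by rewrite (zcoordD g_free ul hl) /= (Sh _).2 addr0.
    by move/eqP; rewrite mulf_eq0 (negPf u0) => /eqP.
  move: l0; rewrite l_ord0 mulr0z add0r => /h_free l'0 i.
  by case: (unliftP ord0 i) => [j ->|->]; [exact: l'0 | exact: l_ord0].
split=> [Sx | [l ->]]; last first.
  apply: subgroup_zcomb => // i; case: (unliftP ord0 i) => [j ->|->]; rewrite ?oconsS ?ocons0 //.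
  exact: (zbasis_mem j hb).1.
have [q xq] := dvdzP (u_dvd x Sx).
have Sy : S (x - u *~ q) by apply: S_sub.2 => //; exact: subgroupMz.
have y0 : zcoord g (x - u *~ q) ord0 = 0.
  have ug : zspan g (u *~ q) by apply: Sg; exact: subgroupMz.
  by rewrite (zcoordB g_free (Sg x Sx) ug) /= (zcoordMz g_free _ (Sg u Su)) xq mulrC subrr.
have [l yl] := (hE _).1 (conj Sy y0).
by exists (ocons q l); rewrite zcomb_ocons -yl addrC subrK.
Qed.

End Step.

Theorem zspan_subgroup_zbasis n (g : 'I_n -> M) S :
  zfree g -> subgroup S -> (forall x, S x -> zspan g x) -> exists r (h : 'I_r -> M), zbasis S h.
Proof.
elim: n g S => [|n IH] g S g_free S_sub Sg.
  have zcomb_ord0 (h : 'I_0 -> M) k : zcomb h k = 0 by rewrite /zcomb big_ord0.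
  exists 0%N, (fun=> 0); split=> [k _ [] // | x].
  split=> [/Sg [k ->] | [k ->]]; rewrite zcomb_ord0; last exact: S_sub.1.
  by exists k; rewrite zcomb_ord0.
(* The leading coordinates of S form a subgroup d Z of int; an element of S with leading
   coordinate d, followed by a basis of the part of S with leading coordinate 0, is a basis. *)
pose L t := exists2 x, S x & zcoord g x ord0 = t.
have L_sub : subgroup L.
  split; first by exists 0; [exact: S_sub.1 | exact: zcoord0].
  move=> _ _ [x Sx <-] [y Sy <-]; exists (x - y); first exact: S_sub.2.
  exact: zcoordB (Sg x Sx) (Sg y Sy) ord0.
have [_ [u Su <-] u_dvd] := int_subgroup_dvd L_sub.
have S'g x : S x /\ zcoord g x ord0 = 0 -> zspan (g \o lift ord0) x.
  by move=> [Sx x0]; apply/(zspan_behead g_free (Sg x Sx)).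
have [u0 | u0] := eqVneq (zcoord g u ord0) 0.
  apply: IH (zfree_behead g_free) S_sub _ => x Sx; apply: S'g; split=> //.
  by apply/eqP; rewrite -dvd0z -u0; apply: u_dvd; exists x.
have S'_sub : subgroup (fun x => S x /\ zcoord g x ord0 = 0).
  split; first by split; [exact: S_sub.1 | exact: zcoord0].
  move=> x y [Sx x0] [Sy y0]; split; first exact: S_sub.2.
  by rewrite (zcoordB g_free (Sg x Sx) (Sg y Sy)) /= x0 y0 subrr.
have [r [h hb]] := IH _ _ (zfree_behead g_free) S'_sub S'g.
exists r.+1, (ocons u h); apply: (zbasis_ocons g_free) => // x Sx.
by apply: u_dvd; exists x.
Qed.

Corollary subgroup_zbasis T n (g : 'I_n -> M) S :
  zbasis T g -> subgroup S -> (forall x, S x -> T x) -> exists r (h : 'I_r -> M), zbasis S h.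
Proof.
by move=> [g_free gE] S_sub ST; apply: zspan_subgroup_zbasis g_free S_sub _ => x /ST /gE.
Qed.

End FreeSubgroup.

Lemma rat_row_scale r (v : 'rV[rat]_r) :
  exists2 D : int, D != 0 & exists w : 'I_r -> int, D%:~R *: v = \row_j (w j)%:~R.
Proof.
exists (\prod_j denq (v 0 j)); first by apply/prodf_neq0 => j _; exact: denq_neq0.
exists (fun j => numq (v 0 j) * \prod_(i | i != j) denq (v 0 i)); apply/rowP => j.
by rewrite !mxE (bigD1 j) //= !intrM numqE; ring.
Qed.

Section RationalRank.
Variables (M : zmodType) (n : nat) (g : 'I_n -> M).
Hypothesis g_free : zfree g.

Definition qrow (x : M) : 'rV[rat]_n := \row_i (zcoord g x i)%:~R.
Definition qmat r (h : 'I_r -> M) : 'M[rat]_(r, n) := \matrix_j qrow (h j).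

Lemma qrowD x y : zspan g x -> zspan g y -> qrow (x + y) = qrow x + qrow y.
Proof. by move=> gx gy; apply/rowP => i; rewrite !mxE (zcoordD g_free gx gy) /= intrD. Qed.

Lemma qrowMz x z : zspan g x -> qrow (x *~ z) = z%:~R *: qrow x.
Proof. by move=> gx; apply/rowP => i; rewrite !mxE (zcoordMz g_free _ gx) intrM mulrC. Qed.

Lemma qrow_inj x y : zspan g x -> zspan g y -> qrow x = qrow y -> x = y.
Proof.
move=> gx gy /rowP e; rewrite (zcoordK gx) (zcoordK gy); apply: eq_zcomb => // i.
by apply: (@intr_inj rat); have := e i; rewrite !mxE.
Qed.

Lemma qrow_zcomb r (h : 'I_r -> M) l : (forall j, zspan g (h j)) ->
  qrow (zcomb h l) = \row_j (l j)%:~R *m qmat h.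
Proof.
move=> hg; apply/rowP => i; rewrite !mxE (zcoord_zcomb_span g_free _ hg) rmorph_sum.
by apply: eq_bigr => j _; rewrite !mxE rmorphM mulrC.
Qed.

Lemma qmat_free r (h : 'I_r -> M) : zfree h -> (forall j, zspan g (h j)) -> row_free (qmat h).
Proof.
move=> h_free hg; apply: inj_row_free => v v0.
have [D D0 [l Dv]] := rat_row_scale v.
have hl : zspan g (zcomb h l) by apply: subgroup_zcomb hg; exact: zspan_subgroup.
have : zcomb h l = 0.
  apply: qrow_inj hl (zspan_subgroup g).1 _.
  by rewrite qrow_zcomb // -Dv -scalemxAl v0 scaler0; apply/rowP => i; rewrite !mxE zcoord0.
move/h_free => l0; apply/rowP => j; apply/eqP.
have := congr1 (fun u : 'rV_r => u 0 j) Dv; rewrite !mxE l0 mulr0z => /eqP.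
by rewrite mulf_eq0 intr_eq0 (negPf D0).
Qed.

Section Basis.
Variables (S : M -> Prop) (r : nat) (h : 'I_r -> M).
Hypotheses (hb : zbasis S h) (Sg : forall x, S x -> zspan g x).

Let hg j : zspan g (h j) := Sg (zbasis_mem j hb).

Lemma rank_qmat : \rank (qmat h) = r.
Proof. by apply/eqP; apply: qmat_free hg; case: hb. Qed.

Lemma qrow_sub x : S x -> (qrow x <= qmat h)%MS.
Proof. by move=> /hb.2 [l ->]; rewrite qrow_zcomb // submxMl. Qed.

Lemma sub_qmat_scale v : (v <= qmat h)%MS ->
  exists2 D : int, D != 0 & exists2 x, S x & qrow x = D%:~R *: v.
Proof.
move=> /submxP [c ->]; have [D D0 [l Dc]] := rat_row_scale c.
exists D => //; exists (zcomb h l); first by apply/hb.2; exists l.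
by rewrite qrow_zcomb // -Dc scalemxAl.
Qed.

End Basis.

Lemma qmat_sub S S' r r' (h : 'I_r -> M) (h' : 'I_r' -> M) :
  zbasis S h -> zbasis S' h' -> (forall x, S x -> S' x) -> (forall x, S' x -> zspan g x) ->
  (qmat h <= qmat h')%MS.
Proof.
move=> hb hb' SS' S'g; apply/row_subP => j; rewrite rowK.
by apply: (qrow_sub hb' S'g); apply: SS'; exact: zbasis_mem hb.
Qed.

End RationalRank.

Lemma zbasis_size_uniq (M : zmodType) (S : M -> Prop) r1 r2 (h1 : 'I_r1 -> M) (h2 : 'I_r2 -> M) :
  zbasis S h1 -> zbasis S h2 -> r1 = r2.
Proof.
move=> hb1 hb2; have [h1_free S_h1] := hb1; have Sh1 x : S x -> zspan h1 x by move/S_h1.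
rewrite -(rank_qmat h1_free hb1 Sh1) -(rank_qmat h1_free hb2 Sh1).
apply: eqmx_rank; rewrite !(qmat_sub h1_free _ _ (fun x Sx => Sx) Sh1) //.
Qed.

Section SumCap.
Variables (M : zmodType) (T S1 S2 S3 : M -> Prop) (rT r1 r2 r3 : nat).
Variables (hT : 'I_rT -> M) (h1 : 'I_r1 -> M) (h2 : 'I_r2 -> M) (h3 : 'I_r3 -> M).
Hypotheses (hbT : zbasis T hT) (hb1 : zbasis S1 h1) (hb2 : zbasis S2 h2) (hb3 : zbasis S3 h3).
Hypotheses (S1T : forall x, S1 x -> T x) (S2T : forall x, S2 x -> T x).
Hypothesis S3E : forall x, S3 x <-> S1 x /\ S2 x.
Hypothesis finite_index : forall x, T x ->
  exists2 d, (0 < d)%N & exists x1 x2, [/\ S1 x1, S2 x2 & x *+ d = x1 + x2].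

Let hT_free : zfree hT := hbT.1.
Let Tg x : T x -> zspan hT x := (hbT.2 x).1.
Let S1g x (S1x : S1 x) := Tg (S1T S1x).
Let S2g x (S2x : S2 x) := Tg (S2T S2x).
Let S31 x (S3x : S3 x) : S1 x := ((S3E x).1 S3x).1.
Let S32 x (S3x : S3 x) : S2 x := ((S3E x).1 S3x).2.
Let S3g x (S3x : S3 x) := S1g (S31 S3x).

Lemma qmat_sum : (qmat hT h1 + qmat hT h2 == qmat hT hT)%MS.
Proof.
rewrite addsmx_sub (qmat_sub hT_free hb1 hbT) // (qmat_sub hT_free hb2 hbT) //=.
apply/row_subP => j; rewrite rowK.
have [d d0 [x1 [x2 [S1x1 S2x2 e]]]] := finite_index (zbasis_mem j hbT).
have -> : qrow hT (hT j) = (d%:Z)%:~R^-1 *: (qrow hT x1 + qrow hT x2).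
  rewrite -(qrowD hT_free (S1g S1x1) (S2g S2x2)) -e pmulrn.
  rewrite (qrowMz hT_free _ (Tg (zbasis_mem j hbT))) scalerA mulVf ?scale1r //.
  by rewrite intr_eq0 eqz_nat -lt0n.
apply/scalemx_sub/addmx_sub_adds.
  exact: (qrow_sub hT_free hb1 S1g).
exact: (qrow_sub hT_free hb2 S2g).
Qed.

Lemma qmat_cap : (qmat hT h1 :&: qmat hT h2 == qmat hT h3)%MS.
Proof.
apply/andP; split; last first.
  by rewrite sub_capmx (qmat_sub hT_free hb3 hb1 S31 S1g) (qmat_sub hT_free hb3 hb2 S32 S2g).
apply/row_subP => j; have vC := row_sub j (qmat hT h1 :&: qmat hT h2)%MS.
have [D1 D10 [x1 S1x1 e1]] := sub_qmat_scale hT_free hb1 S1g (submx_trans vC (capmxSl _ _)).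
have [D2 D20 [x2 S2x2 e2]] := sub_qmat_scale hT_free hb2 S2g (submx_trans vC (capmxSr _ _)).
have x1g := S1g S1x1; have x2g := S2g S2x2.
have gMz x z : zspan hT x -> zspan hT (x *~ z) by apply: subgroupMz; exact: zspan_subgroup.
have e : x1 *~ D2 = x2 *~ D1.
  apply: (qrow_inj (gMz _ _ x1g) (gMz _ _ x2g)).
  by rewrite (qrowMz hT_free _ x1g) (qrowMz hT_free _ x2g) e1 e2 !scalerA mulrC.
have S3x : S3 (x1 *~ D2).
  apply/S3E; split; first by apply: subgroupMz S1x1; exact: zbasis_subgroup hb1.
  by rewrite e; apply: subgroupMz S2x2; exact: zbasis_subgroup hb2.
have := qrow_sub hT_free hb3 S3g S3x; rewrite (qrowMz hT_free _ x1g) e1 scalerA.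
by rewrite (eqmx_scale _ _) // mulf_neq0 // intr_eq0.
Qed.

Theorem zbasis_rank_sum_cap : (r1 + r2 = rT + r3)%N.
Proof.
rewrite -(rank_qmat hT_free hb1 S1g) -(rank_qmat hT_free hb2 S2g) -(rank_qmat hT_free hb3 S3g).
by rewrite -mxrank_sum_cap (eqmx_rank qmat_sum) (eqmx_rank qmat_cap) (rank_qmat hT_free hbT Tg).
Qed.

End SumCap.

Lemma finite_cosets_pigeonhole (M : zmodType) (G : M -> Prop) (s : seq M) (f : nat -> M) :
  subgroup G -> (forall N, exists2 q, q \in s & exists g, G g /\ f N = q + g) ->
  exists N1 N2, (N1 < N2)%N /\ G (f N2 - f N1).
Proof.
move=> G_sub fs.
have [c hc] : exists c : 'I_(size s).+1 -> 'I_(size s),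
    forall N : 'I_(size s).+1, exists g, G g /\ f N = nth 0 s (c N) + g.
  apply: (choice (fun (N : 'I_(size s).+1) (i : 'I_(size s)) =>
    exists g, G g /\ f N = nth 0 s i + g)) => N.
  have [q qs [g [Gg e]]] := fs N; have qi : (index q s < size s)%N by rewrite index_mem.
  by exists (Ordinal qi), g; rewrite nth_index.
have /injectivePn [N1 [N2 N12 c12]] : ~~ injectiveb c.
  by apply/injectiveP => /leq_card; rewrite !card_ord ltnn.
have [[g1 [G1 e1]] [g2 [G2 e2]]] := (hc N1, hc N2).
have G21 : G (f N2 - f N1) by rewrite e1 e2 c12 opprD addrACA subrr add0r; exact: G_sub.2.
case: (ltngtP N1 N2) => [lt | lt | /val_inj eq]; first by exists N1, N2.
  by exists N2, N1; rewrite -opprB; split=> //; exact: subgroupN.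
by rewrite eq eqxx in N12.
Qed.

Section Hyperplanes.
Variables (R : realType) (m : nat).
Local Notation V := 'rV[R]_m.

Lemma dotv0 (a : V) : dotv 0 a = 0.
Proof. by rewrite /dotv big1 // => j _; rewrite mxE mul0r. Qed.

Lemma dotvD (x y a : V) : dotv (x + y) a = dotv x a + dotv y a.
Proof. by rewrite /dotv -big_split; apply: eq_bigr => j _; rewrite mxE mulrDl. Qed.

Lemma dotvB (x y a : V) : dotv (x - y) a = dotv x a - dotv y a.
Proof. by rewrite /dotv -sumrB; apply: eq_bigr => j _; rewrite !mxE mulrBl. Qed.

Lemma dotvMn (x a : V) N : dotv (x *+ N) a = dotv x a *+ N.
Proof. by rewrite /dotv -sumrMnl; apply: eq_bigr => j _; rewrite mulmxnE mulrnAl. Qed.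

Variables (I : Type) (hyp : I -> V * R) (w : 'I_m -> I) (p : V).
Hypothesis meet : meet_in_point hyp w p.
Local Notation nrm k := (hyp (w k)).1.

Lemma dotv_meet k : dotv p (nrm k) = (hyp (w k)).2.
Proof. exact: (meet p).2 erefl k (in_setT k). Qed.

Lemma normals_eq0 x : (forall k, dotv x (nrm k) = 0) -> x = 0.
Proof.
move=> x0; apply: (addrI p); rewrite addr0; apply/(meet (p + x)) => k _.
by rewrite /hyperplane dotvD x0 addr0 dotv_meet.
Qed.

Lemma exists_dotv_normals (b : 'I_m -> R) : exists l, forall k, dotv l (nrm k) = b k.
Proof.
pose N : 'M[R]_m := \matrix_(i, k) nrm k 0 i.
have dotvE x k : dotv x (nrm k) = (x *m N) 0 k.
  by rewrite !mxE; apply: eq_bigr => j _; rewrite mxE.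
have N_unit : N \in unitmx.
  rewrite -row_free_unit; apply: inj_row_free => v v0.
  by apply: normals_eq0 => k; rewrite dotvE v0 mxE.
by exists (\row_k b k *m invmx N) => k; rewrite dotvE mulmxKV // mxE.
Qed.

Lemma meet_in_point_shift (w' : 'I_m -> I) v :
  (forall k x, hyperplane (hyp (w' k)) x <-> hyperplane (hyp (w k)) (x - v)) ->
  meet_in_point hyp w' (p + v).
Proof.
move=> hv x; split=> [Wx | -> k _].
  by rewrite -[x](subrK v); congr (_ + _); apply/(meet (x - v)) => k _; apply/hv; exact: Wx.
by apply/hv; rewrite addrK; exact: dotv_meet.
Qed.

Lemma stabAE (Gamma : V -> Prop) A x :
  stabA hyp Gamma w A x <-> Gamma x /\ forall k, k \in A -> dotv x (nrm k) = 0.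
Proof.
split=> [[Gx Wx] | [Gx x0]]; split=> //; last first.
  by move=> y; split=> Wy k kA; have := Wy k kA; rewrite /hyperplane dotvB x0 // subr0.
move=> k kA; have /Wx : translate (W_A hyp w A) x (p + x).
  by rewrite /translate addrK => k' _; exact: dotv_meet.
move/(_ k kA); rewrite /hyperplane dotvD dotv_meet => /eqP.
by rewrite -subr_eq0 addrAC subrr add0r => /eqP.
Qed.

Section Stabilizers.
Variable Gamma : V -> Prop.
Local Notation stab := (stabA hyp Gamma w).

Lemma stabA_subset (A A' : {set 'I_m}) x : A \subset A' -> stab A' x -> stab A x.
Proof. by move=> /subsetP AA' /stabAE [Gx x0]; apply/stabAE; split=> // k /AA'; exact: x0. Qed.

Lemma stabAU (A A' : {set 'I_m}) x : stab (A :|: A') x <-> stab A x /\ stab A' x.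
Proof.
split=> [Sx | [SAx SA'x]]; first by split; apply: stabA_subset Sx; rewrite ?subsetUl ?subsetUr.
have [Gx x0] := (stabAE _ _ _).1 SAx; have [_ x0'] := (stabAE _ _ _).1 SA'x.
by apply/stabAE; split=> // k; rewrite inE => /orP [] kA; [exact: x0 | exact: x0'].
Qed.

Hypothesis Gamma_sub : subgroup Gamma.

Lemma stabA_subgroup A : subgroup (stab A).
Proof.
split; first by apply/stabAE; split=> [|k _]; [exact: Gamma_sub.1 | exact: dotv0].
move=> x y /stabAE [Gx x0] /stabAE [Gy y0]; apply/stabAE; split; first exact: Gamma_sub.2.
by move=> k kA; rewrite dotvB x0 // y0 // subrr.
Qed.

Lemma stabA_setT x : stab setT x <-> x = 0.
Proof.
split=> [/stabAE [_ x0] | ->]; first by apply: normals_eq0 => k; exact: x0.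
by apply/stabAE; split=> [|k _]; [exact: Gamma_sub.1 | exact: dotv0].
Qed.

Hypothesis Gamma_inv : forall i g, Gamma g ->
  exists j, same_set (hyperplane (hyp j)) (translate (hyperplane (hyp i)) g).

Lemma Pset_shift (B : {set 'I_m}) gam v : Gamma gam ->
  (forall k, dotv v (nrm k) = if k \in B then dotv gam (nrm k) else 0) -> Pset hyp (p + v).
Proof.
move=> Ggam hv.
have [J HJ] := choice
  (fun k j => same_set (hyperplane (hyp j)) (translate (hyperplane (hyp (w k))) gam))
  (fun k => Gamma_inv (w k) Ggam).
exists (fun k => if k \in B then J k else w k); apply: meet_in_point_shift => k x.
have := hv k; case: (k \in B) => hvk; last by rewrite /hyperplane dotvB hvk subr0.
by apply: iff_trans (HJ k x) _; rewrite /translate /hyperplane !dotvB hvk.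
Qed.

Hypothesis P_orbits : exists s : seq V, forall q, Pset hyp q ->
  exists2 q0, q0 \in s & exists g, Gamma g /\ q = q0 + g.

Lemma stabA_finite_index (A1 A2 : {set 'I_m}) x : stab (A1 :&: A2) x ->
  exists2 d, (0 < d)%N & exists x1 x2, [/\ stab A1 x1, stab A2 x2 & x *+ d = x1 + x2].
Proof.
move=> /stabAE [Gx x0]; have [s orbits] := P_orbits.
have [l hl] := exists_dotv_normals (fun k => if k \in A2 then dotv x (nrm k) else 0).
have P_l N : Pset hyp (p + l *+ N).
  apply: (@Pset_shift A2 (x *+ N)) => [|k]; first exact: subgroupMn.
  by rewrite !dotvMn hl; case: (k \in A2); rewrite ?mul0rn.
have [N1 [N2 [N12 G12]]] := finite_cosets_pigeonhole Gamma_sub (fun N => orbits _ (P_l N)).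
have Gl : Gamma (l *+ (N2 - N1)).
  by move: G12; rewrite opprD addrACA subrr add0r (mulrnBr _ (ltnW N12)).
exists (N2 - N1)%N; first by rewrite subn_gt0.
exists (l *+ (N2 - N1)), (x *+ (N2 - N1) - l *+ (N2 - N1)); split; last by rewrite addrC subrK.
  apply/stabAE; split=> // k kA1; rewrite dotvMn hl.
  case: ifP => kA2; last exact: mul0rn.
  by rewrite x0 ?mul0rn // inE kA1 kA2.
apply/stabAE; split=> [|k kA2]; first by apply: Gamma_sub.2 => //; exact: subgroupMn.
by rewrite dotvB !dotvMn hl kA2 subrr.
Qed.

End Stabilizers.
End Hyperplanes.

Section ZRank.
Variables (R : realType) (m : nat).
Local Notation V := 'rV[R]_m.

Lemma zrank_zbasis (S : V -> Prop) r (h : 'I_r -> V) : zbasis S h -> zrank S = r.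
Proof.
move=> hb; have [h' hb'] : has_zrank S (zrank S) by apply: epsilon_spec; exists r, h.
exact: zbasis_size_uniq hb' hb.
Qed.

Lemma zrank_eq0 (S : V -> Prop) : (forall x, S x <-> x = 0) -> zrank S = 0%N.
Proof.
move=> S0; apply: (@zrank_zbasis _ _ (fun=> 0)); split=> [k _ [] // | x].
rewrite S0; split=> [-> | [k ->]]; first by exists (fun=> 0); rewrite zcomb0.
by rewrite /zcomb big_ord0.
Qed.

Lemma zrank_sum_cap (Gamma T S1 S2 S3 : V -> Prop) n :
  has_zrank Gamma n -> subgroup T -> subgroup S1 -> subgroup S2 ->
  (forall x, T x -> Gamma x) -> (forall x, S1 x -> T x) -> (forall x, S2 x -> T x) ->
  (forall x, S3 x <-> S1 x /\ S2 x) ->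
  (forall x, T x -> exists2 d, (0 < d)%N & exists x1 x2, [/\ S1 x1, S2 x2 & x *+ d = x1 + x2]) ->
  (zrank S1 + zrank S2 = zrank T + zrank S3)%N.
Proof.
move=> [g gb] T_sub S1_sub S2_sub TG S1T S2T S3E index.
have S3_sub : subgroup S3.
  split; first by apply/S3E; split; [exact: S1_sub.1 | exact: S2_sub.1].
  move=> x y /S3E [S1x S2x] /S3E [S1y S2y].
  by apply/S3E; split; [exact: S1_sub.2 | exact: S2_sub.2].
have [rT [hT hbT]] := subgroup_zbasis gb T_sub TG.
have [r1 [h1 hb1]] := subgroup_zbasis gb S1_sub (fun x S1x => TG _ (S1T _ S1x)).
have [r2 [h2 hb2]] := subgroup_zbasis gb S2_sub (fun x S2x => TG _ (S2T _ S2x)).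
have [r3 [h3 hb3]] := subgroup_zbasis gb S3_sub (fun x S3x => TG _ (S1T _ ((S3E x).1 S3x).1)).
rewrite (zrank_zbasis hbT) (zrank_zbasis hb1) (zrank_zbasis hb2) (zrank_zbasis hb3).
exact: zbasis_rank_sum_cap hbT hb1 hb2 hb3 S1T S2T S3E index.
Qed.

End ZRank.

Theorem mainTheorem8 (R : realType) (m : nat)
  (Gamma : 'rV[R]_m -> Prop) (I : countType) (hyp : I -> 'rV[R]_m * R) :
  (* Gamma: finitely generated free abelian dense subgroup of V *)
  (exists n, has_zrank Gamma n) ->
  dense_in_V Gamma ->
  (* C = {hyperplane (hyp i)} : affine hyperplanes (nonzero normals) *)
  (forall i, (hyp i).1 != 0) ->
  (* C is Gamma-invariant *)
  (forall i g, Gamma g -> exists j,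
      same_set (hyperplane (hyp j)) (translate (hyperplane (hyp i)) g)) ->
  (* C has finitely many Gamma-orbits *)
  (exists s : seq I, forall i, exists2 j, j \in s & exists g, Gamma g /\
      same_set (hyperplane (hyp i)) (translate (hyperplane (hyp j)) g)) ->
  (* the normals of elements of C span V *)
  (forall v : 'rV[R]_m, exists s : seq (I * R),
      v = \sum_(q <- s) q.2 *: (hyp q.1).1) ->
  (* P consists of finitely many Gamma-orbits *)
  (exists s : seq 'rV[R]_m, forall p, Pset hyp p ->
      exists2 q, q \in s & exists g, Gamma g /\ p = q + g) ->
  forall (w : 'I_m -> I), (exists p, meet_in_point hyp w p) ->
  forall A1 A2 : {set 'I_m},
    (A1 :&: A2 = set0 ->
      (zrank (stabA hyp Gamma w A1) + zrank (stabA hyp Gamma w A2)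
       = zrank Gamma + zrank (stabA hyp Gamma w (A1 :|: A2)))%N)
    /\
    (A1 :|: A2 = setT ->
      (zrank (stabA hyp Gamma w A1) + zrank (stabA hyp Gamma w A2)
       = zrank (stabA hyp Gamma w (A1 :&: A2)))%N).
Proof.
move=> [n Gamma_rank] _ _ Gamma_inv _ _ P_orbits w [p meet] A1 A2.
have Gamma_sub : subgroup Gamma by case: Gamma_rank => g; exact: zbasis_subgroup.
have stab_sub := stabA_subgroup meet Gamma_sub.
have index := stabA_finite_index meet Gamma_sub Gamma_inv P_orbits (A1 := A1) (A2 := A2).
have stab_Gamma A x : stabA hyp Gamma w A x -> Gamma x by case.
have stabU := stabAU meet Gamma A1 A2.
split=> [disj | cov].
  have Gamma_cap x : Gamma x -> stabA hyp Gamma w (A1 :&: A2) x.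
    by move=> Gx; apply/(stabAE meet); split=> // k; rewrite disj inE.
  exact: (zrank_sum_cap Gamma_rank Gamma_sub (stab_sub A1) (stab_sub A2) (fun x Gx => Gx)
    (stab_Gamma A1) (stab_Gamma A2) stabU (fun x Gx => index x (Gamma_cap x Gx))).
have S0 x : stabA hyp Gamma w (A1 :|: A2) x <-> x = 0 by rewrite cov; exact: stabA_setT.
rewrite -[RHS]addn0 -(zrank_eq0 S0).
exact: (zrank_sum_cap Gamma_rank (stab_sub _) (stab_sub A1) (stab_sub A2) (stab_Gamma _)
  (fun x => stabA_subset meet (subsetIl A1 A2)) (fun x => stabA_subset meet (subsetIr A1 A2))
  stabU index).
Qed.
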